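(* Let $G$ be a graph with no induced $P_7$, $C_4$ or $C_6$, and let $(B_1,\dots,B_5)$ be a nice blowup of $C_5$ in $G$. Then: (1) for each $i$, the vertices of $B_i$ can be ordered $b_i^1,\dots,b_i^{|B_i|}$ so that $N_{B_{i-1}\cup B_{i+1}}(b_i^1)\subseteq N_{B_{i-1}\cup B_{i+1}}(b_i^2)\subseteq\cdots\subseteq N_{B_{i-1}\cup B_{i+1}}(b_i^{|B_i|})$; (2) for each $i$, there is a vertex in $B_i$ complete to $B_{i-1}\cup B_{i+1}$; in particular, each vertex of $B_{i-1}$ and each vertex of $B_{i+1}$ have a common neighbor in $B_i$.
   Context: Indices modulo $5$. A tuple $(B_1,\dots,B_5)$ of subsets of $V(G)$ is a nice blowup of $C_5$ if: each $B_i$ is a clique and the $B_i$ are pairwise disjoint; every vertex of $B_i$ has a neighbor in $B_{i-1}$ and in $B_{i+1}$; $B_i$ is anticomplete to $B_{i+2}$; and there are no $a\in B_i$, distinct $b,c\in B_{i+1}$, $d\in B_{i+2}$ with $G[\{a,b,c,d\}]\cong P_4$. For $S\subseteq V(G)$ and a vertex $v$, $N_S(v)$ is the set of neighbors of $v$ in $S$. A vertex is complete to a set if it is adjacent to all its vertices. *)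

From mathcomp Require Import all_boot.
Set Implicit Arguments. Unset Strict Implicit. Unset Printing Implicit Defensive.

(* A simple graph: vertex set T (finite), adjacency e (assumed symmetric, irreflexive). *)

Definition path_rel (k : nat) : rel 'I_k :=
  fun i j => (i.+1 == j :> nat) || (j.+1 == i :> nat).
Definition cycle_rel (k : nat) : rel 'I_k :=
  fun i j => path_rel i j
             || ((i == 0 :> nat) && (j == k.-1 :> nat))
             || ((j == 0 :> nat) && (i == k.-1 :> nat)).

Definition has_induced (T : finType) (e : rel T) (k : nat) (H : rel 'I_k) : Prop :=
  exists f : 'I_k -> T, injective f /\ forall i j, e (f i) (f j) = H i j.

Definition induces_on (T : finType) (e : rel T) (k : nat) (H : rel 'I_k)
    (S : {set T}) : Prop :=
  exists f : 'I_k -> T,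
    [/\ injective f, f @: setT = S & forall i j, e (f i) (f j) = H i j].

Definition nxt (i : 'I_5) : 'I_5 := inord (i.+1 %% 5).
Definition prv (i : 'I_5) : 'I_5 := inord ((i + 4) %% 5).

Definition N_in (T : finType) (e : rel T) (S : {set T}) (v : T) : {set T} :=
  [set y in S | e v y].

Definition nice_blowup_C5 (T : finType) (e : rel T) (B : 'I_5 -> {set T}) : Prop :=
  (forall i, B i != set0) /\
  [/\ (forall i x y, x \in B i -> y \in B i -> x != y -> e x y),
      (forall i j, i != j -> [disjoint B i & B j]),
      (forall i x, x \in B i ->
         (exists2 y, y \in B (prv i) & e x y) /\ (exists2 y, y \in B (nxt i) & e x y)),
      (forall i x y, x \in B i -> y \in B (nxt (nxt i)) -> ~~ e x y)
    & (forall i a b c d, a \in B i -> b \in B (nxt i) -> c \in B (nxt i) -> b != c ->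
         d \in B (nxt (nxt i)) -> ~ induces_on e (@path_rel 4) [set a; b; c; d])].

(* Neighbourhoods within a clique of the blowup are pairwise comparable: if b, c
   in B_i had private neighbours x, y in B_(i-1) u B_(i+1), then b x y c is an
   induced C4 when x, y lie in the same (clique) side, and x b c y is an induced
   P4 of the forbidden shape when they lie on opposite sides (these two sides
   are anticomplete). Sorting B_i by neighbourhood inclusion gives (1); its last
   element v sees every vertex of B_(i-1) u B_(i+1), since each such vertex has
   some neighbour in B_i, whose neighbourhood is contained in that of v. *)

From mathcomp Require Import all_boot.

Set Implicit Arguments.
Unset Strict Implicit.
Unset Printing Implicit Defensive.

Lemma nxt_prv (i : 'I_5) : nxt (prv i) = i.
Proof. by case: i => -[|[|[|[|[|m]]]]] //= ?; apply/val_inj; rewrite /= !inordK. Qed.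

Lemma prv_nxt (i : 'I_5) : prv (nxt i) = i.
Proof. by case: i => -[|[|[|[|[|m]]]]] //= ?; apply/val_inj; rewrite /= !inordK. Qed.

Lemma prv_neq (i : 'I_5) : prv i != i.
Proof. by case: i => -[|[|[|[|[|m]]]]] //= ?; rewrite -val_eqE /= inordK. Qed.

Lemma nxt_neq (i : 'I_5) : nxt i != i.
Proof. by case: i => -[|[|[|[|[|m]]]]] //= ?; rewrite -val_eqE /= inordK. Qed.

Section InducedFourVertices.

Variables (T : finType) (e : rel T).
Hypotheses (e_sym : symmetric e) (e_irr : irreflexive e).

Lemma induced_seq4 (a b c d : T) (H : rel 'I_4) :
  uniq [:: a; b; c; d] ->
  (forall i j : 'I_4, e (nth a [:: a; b; c; d] i) (nth a [:: a; b; c; d] j) = H i j) ->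
  has_induced e H /\ induces_on e H [set a; b; c; d].
Proof.
move=> abcd_uniq eH; set f := fun i : 'I_4 => nth a [:: a; b; c; d] i.
have f_inj : injective f by move=> i j /eqP; rewrite nth_uniq // => /eqP/val_inj.
split; first by exists f.
exists f; split => //; apply/setP => z; rewrite !inE; apply/imsetP/idP.
  by case=> -[[|[|[|[|k]]]] Hk] _ -> //=; rewrite ?eqxx ?orbT.
rewrite -!orbA => /or4P[] /eqP ->.
- by exists (@Ordinal 4 0 isT).
- by exists (@Ordinal 4 1 isT).
- by exists (@Ordinal 4 2 isT).
- by exists (@Ordinal 4 3 isT).
Qed.

Lemma induces_P4 (a b c d : T) : uniq [:: a; b; c; d] ->
  e a b -> e b c -> e c d -> ~~ e a c -> ~~ e a d -> ~~ e b d ->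
  induces_on e (@path_rel 4) [set a; b; c; d].
Proof.
move=> abcd_uniq ab bc cd /negbTE ac /negbTE ad /negbTE bd.
apply: (proj2 (induced_seq4 abcd_uniq _)).
by move=> [[|[|[|[|k]]]] Hk] [[|[|[|[|l]]]] Hl] //=; rewrite ?e_irr // 1?e_sym.
Qed.

Lemma has_induced_C4 (a b c d : T) : uniq [:: a; b; c; d] ->
  e a b -> e b c -> e c d -> e d a -> ~~ e a c -> ~~ e b d ->
  has_induced e (@cycle_rel 4).
Proof.
move=> abcd_uniq ab bc cd da /negbTE ac /negbTE bd.
apply: (proj1 (induced_seq4 abcd_uniq _)).
by move=> [[|[|[|[|k]]]] Hk] [[|[|[|[|l]]]] Hl] //=; rewrite ?e_irr // 1?e_sym.
Qed.

End InducedFourVertices.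

Section NeighbourhoodChain.

Variables (T : finType) (e : rel T).
Hypotheses (e_sym : symmetric e) (e_irr : irreflexive e).
Hypothesis C4_free : ~ has_induced e (@cycle_rel 4).

Variables X C Y : {set T}.
Hypotheses (X_clique : {in X &, forall x y, x != y -> e x y})
           (C_clique : {in C &, forall x y, x != y -> e x y})
           (Y_clique : {in Y &, forall x y, x != y -> e x y}).
Hypotheses (CX_disjoint : [disjoint C & X]) (CY_disjoint : [disjoint C & Y]).
Hypothesis XY_anticomplete : {in X & Y, forall x y, ~~ e x y}.
Hypothesis XCCY_P4_free : forall x b c y, x \in X -> b \in C -> c \in C -> b != c ->
  y \in Y -> ~ induces_on e (@path_rel 4) [set x; b; c; y].

Local Notation N := (N_in e (X :|: Y)).

Lemma N_in_total : {in C &, forall b c, (N b \subset N c) || (N c \subset N b)}.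
Proof.
move=> b c bC cC; apply/norP => -[/subsetPn[x xNb xNc] /subsetPn[y yNc yNb]].
move: xNb yNc; rewrite !inE => /andP[xXY bx] /andP[yXY cy].
move: xNc yNb; rewrite !inE xXY yXY /= => ncx nby.
have bc : b != c by apply: contraNneq ncx => <-.
have xy : x != y by apply: contraNneq nby => <-.
have bx_neq : b != x by apply: contraTneq bx => ->; rewrite e_irr.
have cy_neq : c != y by apply: contraTneq cy => ->; rewrite e_irr.
have C_notin_XY z : z \in C -> ~~ ((z \in X) || (z \in Y)).
  by move=> zC; rewrite negb_or (disjointFr CX_disjoint zC) (disjointFr CY_disjoint zC).
have by_neq : b != y by apply: contraTneq yXY => <-; exact: C_notin_XY.
have cx_neq : c != x by apply: contraTneq xXY => <-; exact: C_notin_XY.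
have uniq_bxyc : uniq [:: b; x; y; c].
  by rewrite /= !inE !negb_or bx_neq by_neq bc xy eq_sym cx_neq eq_sym cy_neq.
have uniq_xbcy : uniq [:: x; b; c; y].
  by rewrite /= !inE !negb_or eq_sym bx_neq eq_sym cx_neq xy bc by_neq cy_neq.
have ebc := C_clique bC cC bc.
move: xXY yXY => /orP[xX|xY] /orP[yX|yY].
- apply: C4_free.
  by apply: (has_induced_C4 e_sym e_irr uniq_bxyc bx (X_clique xX yX xy) _ _ nby);
    rewrite e_sym.
- apply: (XCCY_P4_free xX bC cC bc yY).
  by apply: (induces_P4 e_sym e_irr uniq_xbcy _ ebc cy _ (XY_anticomplete xX yY) nby);
    rewrite e_sym.
- apply: (XCCY_P4_free yX cC bC _ xY); first by rewrite eq_sym.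
  have uniq_ycbx : uniq [:: y; c; b; x] by move: uniq_xbcy; rewrite -rev_uniq.
  by apply: (induces_P4 e_sym e_irr uniq_ycbx _ _ bx _ (XY_anticomplete yX xY) ncx);
    rewrite e_sym.
- apply: C4_free.
  by apply: (has_induced_C4 e_sym e_irr uniq_bxyc bx (Y_clique xY yY xy) _ _ nby);
    rewrite e_sym.
Qed.

End NeighbourhoodChain.

Section TotalPreorderOnSet.

Variables (T : finType) (r : rel T) (C : {set T}).
Hypotheses (r_refl : reflexive r) (r_trans : transitive r) (r_total : {in C &, total r}).

Lemma sorted_enum_set : exists s : seq T,
  [/\ uniq s, (forall x, (x \in s) = (x \in C)) &
      forall (x0 : T) j k, j <= k -> k < size s -> r (nth x0 s j) (nth x0 s k)].
Proof.
exists (sort r (enum C)); split=> [|x|x0 j k jk ks].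
- by rewrite sort_uniq enum_uniq.
- by rewrite mem_sort mem_enum.
have sorted_s : sorted r (sort r (enum C)).
  by apply: (sort_sorted_in r_total); apply/allP => x; rewrite mem_enum.
apply: (sorted_leq_nth r_trans r_refl x0 sorted_s) => //.
by rewrite inE (leq_ltn_trans jk ks).
Qed.

Lemma max_in_set : C != set0 -> exists2 v, v \in C & {in C, forall c, r c v}.
Proof.
case/set0Pn=> c0 c0C; have [s [_ sC s_sorted]] := sorted_enum_set.
have s_gt0 : 0 < size s by rewrite (@leq_ltn_trans (index c0 s)) // index_mem sC.
exists (nth c0 s (size s).-1); first by rewrite -sC mem_nth // prednK.
move=> c cC; have cs : c \in s by rewrite sC.
rewrite -(nth_index c0 cs); apply: s_sorted; last by rewrite prednK.
by rewrite -ltnS prednK // index_mem.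
Qed.

End TotalPreorderOnSet.

Lemma max_N_in_complete (T : finType) (e : rel T) (S C : {set T}) (v : T) :
  symmetric e ->
  {in C, forall c, N_in e S c \subset N_in e S v} ->
  {in S, forall y, exists2 z, z \in C & e y z} ->
  {in S, forall y, e v y}.
Proof.
move=> e_sym v_max S_dominated y yS; have [z zC yz] := S_dominated y yS.
have : y \in N_in e S z by rewrite inE yS e_sym.
by move/(subsetP (v_max z zC)); rewrite inE yS.
Qed.

Theorem lemma4p1 (T : finType) (e : rel T) (B : 'I_5 -> {set T}) :
  symmetric e -> irreflexive e ->
  ~ has_induced e (@path_rel 7) ->
  ~ has_induced e (@cycle_rel 4) ->
  ~ has_induced e (@cycle_rel 6) ->
  nice_blowup_C5 e B ->
  forall i : 'I_5,
    (exists s : seq T,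
        [/\ uniq s, (forall x, (x \in s) = (x \in B i)) &
            forall (x0 : T) j k, j <= k -> k < size s ->
              N_in e (B (prv i) :|: B (nxt i)) (nth x0 s j) \subset
              N_in e (B (prv i) :|: B (nxt i)) (nth x0 s k)])
    /\ (exists2 v, v \in B i & forall y, y \in B (prv i) :|: B (nxt i) -> e v y)
    /\ (forall x y, x \in B (prv i) -> y \in B (nxt i) ->
          exists2 z, z \in B i & e z x && e z y).
Proof.
move=> e_sym e_irr _ C4_free _ [B_nonempty [B_clique B_disjoint B_dominated B_anti B_P4_free]] i.
pose N_le b c := N_in e (B (prv i) :|: B (nxt i)) b \subset N_in e (B (prv i) :|: B (nxt i)) c.
have N_le_refl : reflexive N_le by move=> b; apply: subxx.
have N_le_trans : transitive N_le by move=> b a c; apply: subset_trans.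
have N_le_total : {in B i &, total N_le}.
  apply: (N_in_total e_sym e_irr C4_free) => //; try exact: B_clique.
  - by apply: B_disjoint; rewrite eq_sym prv_neq.
  - by apply: B_disjoint; rewrite eq_sym nxt_neq.
  - by have := B_anti (prv i); rewrite nxt_prv.
  - by have := B_P4_free (prv i); rewrite nxt_prv.
have [v vBi v_max] := max_in_set N_le_refl N_le_trans N_le_total (B_nonempty i).
have v_complete : {in B (prv i) :|: B (nxt i), forall y, e v y}.
  apply: (max_N_in_complete e_sym v_max) => y; rewrite inE => /orP[yP|yN].
  - by have [_ [z]] := B_dominated _ _ yP; rewrite nxt_prv; exists z.
  - by have [[z]] := B_dominated _ _ yN; rewrite prv_nxt; exists z.
split; first exact: (sorted_enum_set N_le_refl N_le_trans N_le_total).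
split; first by exists v.
by move=> x y xP yN; exists v; rewrite // !v_complete // inE ?xP ?yN ?orbT.
Qed.
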